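(* Let $G$ be a connected $r$-regular finite simple graph on $n$ vertices, and let the spectrum of its adjacency matrix $A_G$ be $r,\lambda_2,\lambda_3,\dots,\lambda_n$ (listed with multiplicity, not necessarily distinct). Let $m$ be the maximum multiplicity of a value in the list $\lambda_2,\dots,\lambda_n$. Then $\mathrm{mur}(G)=n-(m+1)$.
   Context: For a finite simple undirected graph $G$ on vertices $v_1,\dots,v_n$, let $A_G$ be its $(0,1)$-adjacency matrix, $D_G=\mathrm{diag}(d_1,\dots,d_n)$ with $d_i$ the degree of $v_i$, $I$ the $n\times n$ identity matrix and $J$ the $n\times n$ all-ones matrix. A universal adjacency matrix of $G$ is any matrix $\alpha A_G+\beta I+\gamma J+\delta D_G$ with real scalars $\alpha,\beta,\gamma,\delta$ and $\alpha\neq 0$. The minimum universal rank $\mathrm{mur}(G)$ is the minimum rank over all universal adjacency matrices of $G$. *)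

From HB Require Import structures.
From mathcomp Require Import all_boot all_order all_algebra.
From mathcomp Require Import reals.
Set Implicit Arguments. Unset Strict Implicit. Unset Printing Implicit Defensive.
Import Order.TTheory GRing.Theory Num.Theory.
Local Open Scope ring_scope.

Definition simple_graph (n : nat) (e : rel 'I_n) : Prop :=
  symmetric e /\ irreflexive e.

Definition deg (n : nat) (e : rel 'I_n) (i : 'I_n) : nat := #|[set j | e i j]|.

Definition regular (n : nat) (e : rel 'I_n) (r : nat) : Prop :=
  forall i, deg e i = r.

Definition connected_graph (n : nat) (e : rel 'I_n) : Prop :=
  forall i j : 'I_n, connect e i j.

Definition adjmx (R : realType) (n : nat) (e : rel 'I_n) : 'M[R]_n :=
  \matrix_(i, j) (e i j)%:R.

Definition degmx (R : realType) (n : nat) (e : rel 'I_n) : 'M[R]_n :=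
  \matrix_(i, j) (if i == j then (deg e i)%:R else 0).

Definition allones (R : realType) (n : nat) : 'M[R]_n := const_mx 1.

Definition univ_adj (R : realType) (n : nat) (e : rel 'I_n) (a b c d : R)
  : 'M[R]_n :=
  a *: adjmx R e + b *: 1%:M + c *: allones R n + d *: degmx R e.

Definition is_mur (R : realType) (n : nat) (e : rel 'I_n) (k : nat) : Prop :=
  (exists a b c d : R, a != 0 /\ \rank (univ_adj e a b c d) = k) /\
  (forall a b c d : R, a != 0 -> (k <= \rank (univ_adj e a b c d))%N).

From HB Require Import structures.
From mathcomp Require Import all_boot all_order all_algebra.
From mathcomp Require Import reals zify ring.
Import Order.TTheory GRing.Theory Num.Theory.
Local Open Scope ring_scope.
Set Implicit Arguments. Unset Strict Implicit. Unset Printing Implicit Defensive.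

(* For a real symmetric matrix A, the rank of A - x equals n minus the
   multiplicity of x as a root of the characteristic polynomial: the geometric
   multiplicity never exceeds the algebraic one, and the generalized
   eigenspaces, which fill the space, are eigenspaces since A - x is symmetric.
   For an r-regular graph the universal adjacency matrix is a multiple of
   A - mu + c J, where J = 1^T 1 has rank one and 1 is an eigenvector of A for
   r. Hence its rank is at least n - 1 - mult(mu), the multiplicity of mu among
   the remaining eigenvalues. Equality holds for mu = r, c = 0, and for mu <> r
   with c = (mu - r)/n, which turns 1 into an extra kernel vector. *)

Lemma prodr_ord_if_leq (R : pzSemiRingType) (x : R) k n :
  \prod_(i < n) (if (k <= i)%N then x else 1) = x ^+ (n - k).
Proof.
elim: n => [|n IHn]; first by rewrite big_ord0 sub0n expr0.
rewrite big_ord_recr /= IHn; case: (leqP k n) => [le_kn|lt_nk].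
  by rewrite subSn // exprSr.
by rewrite mulr1; congr (_ ^+ _); lia.
Qed.

Section FieldMatrix.
Variable F : fieldType.

Lemma sub_kermx_mulmx m p q (X : 'M[F]_(m, p)) (Y : 'M[F]_(m, q)) :
  (forall v : 'rV_m, v *m X = 0 -> v *m Y = 0) -> (kermx X <= kermx Y)%MS.
Proof.
move=> XY; apply/sub_kermxP/row_matrixP => i; rewrite row_mul row0.
by apply: XY; rewrite -row_mul mulmx_ker row0.
Qed.

Lemma mxrank_leq_ker m p q (X : 'M[F]_(m, p)) (Y : 'M[F]_(m, q)) :
  (forall v : 'rV_m, v *m X = 0 -> v *m Y = 0) -> (\rank Y <= \rank X)%N.
Proof.
move=> /sub_kermx_mulmx/mxrankS; rewrite !mxrank_ker.
by have := rank_leq_row X; have := rank_leq_row Y; lia.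
Qed.

Lemma mxrank_ltn_ker m p q (X : 'M[F]_(m, p)) (Y : 'M[F]_(m, q)) (u : 'rV_m) :
  (forall v : 'rV_m, v *m X = 0 -> v *m Y = 0) -> u *m Y = 0 -> u *m X != 0 ->
  (\rank Y < \rank X)%N.
Proof.
move=> XY uY uX; have ltXY : (kermx X < kermx Y)%MS.
  rewrite ltmxE sub_kermx_mulmx //=; apply: contra uX => YX.
  by rewrite -sub_kermx; apply: submx_trans YX; rewrite sub_kermx uY.
move/rank_ltmx: ltXY; rewrite !mxrank_ker.
by have := rank_leq_row X; have := rank_leq_row Y; lia.
Qed.

Lemma char_poly_conj n (Q A : 'M[F]_n) : Q \in unitmx ->
  char_poly (Q *m A *m invmx Q) = char_poly A.
Proof.
move=> Qu; set P := map_mx polyC Q; set Pi := map_mx polyC (invmx Q).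
have PPi : P *m Pi = 1%:M by rewrite -map_mxM mulmxV // map_mx1.
rewrite /char_poly.
have -> : char_poly_mx (Q *m A *m invmx Q) = P *m char_poly_mx A *m Pi.
  rewrite /char_poly_mx mulmxBr mulmxBl mul_mx_scalar -scalemxAl PPi scalemx1.
  by rewrite !map_mxM.
by rewrite !det_mulmx mulrAC -det_mulmx PPi det1 mul1r.
Qed.

Lemma dvdp_det_pid n r (p : {poly F}) (M : 'M[F]_n) :
  p ^+ (n - r) %| \det (p%:M - map_mx polyC (pid_mx r *m M)).
Proof.
set L := _ - _.
pose d := \row_(i < n) (if (r <= i)%N then p else 1).
pose N := \matrix_(i, j) (if (r <= i)%N then (i == j)%:R else L i j).
have -> : L = diag_mx d *m N.
  apply/matrixP => i j; rewrite mul_diag_mx !mxE.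
  case: leqP => [le_ri|_]; last by rewrite mul1r.
  rewrite big1 ?rmorph0 ?subr0 ?mulr_natr => // k _.
  by rewrite !mxE ltnNge le_ri andbF mul0r.
rewrite det_mulmx det_diag -(prodr_ord_if_leq p r).
by under eq_bigr do rewrite mxE; apply: dvdp_mulr.
Qed.

(* Conjugating by the column basis of A - x leaves only \rank (A - x) nonzero
   rows in A - x. *)
Lemma XsubC_corank_dvdp_char_poly n (A : 'M[F]_n) x :
  ('X - x%:P) ^+ (n - \rank (A - x%:M)) %| char_poly A.
Proof.
set B := A - x%:M; set Q := col_ebase B.
have Qu : invmx Q \in unitmx by rewrite unitmx_inv col_ebase_unit.
have conjB : invmx Q *m B *m Q = pid_mx (\rank B) *m (row_ebase B *m Q).
  by rewrite -{1}(mulmx_ebase B) -!mulmxA mulKmx ?col_ebase_unit.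
rewrite -(char_poly_conj A Qu) invmxK /char_poly.
have -> : char_poly_mx (invmx Q *m A *m Q) =
          ('X - x%:P)%:M - map_mx polyC (invmx Q *m B *m Q).
  have -> : invmx Q *m B *m Q = invmx Q *m A *m Q - x%:M.
    rewrite mulmxBr mulmxBl mul_mx_scalar -scalemxAl.
    by rewrite mulVmx ?col_ebase_unit // scalemx1.
  by rewrite /char_poly_mx map_mxB map_scalar_mx /= raddfB opprB addrA subrK.
by rewrite conjB dvdp_det_pid.
Qed.

Lemma corank_leq_count n (A : 'M[F]_n) (s : seq F) x :
  char_poly A = \prod_(y <- s) ('X - y%:P) ->
  (n - \rank (A - x%:M)%R <= count_mem x s)%N.
Proof.
move=> charA; rewrite -(mu_prod_XsubC x s) -charA.
by rewrite mup_geq ?XsubC_corank_dvdp_char_poly ?monic_neq0 ?char_poly_monic.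
Qed.

End FieldMatrix.

Lemma sum_count_mem_undup (T : eqType) (s : seq T) :
  (\sum_(x <- undup s) count_mem x s)%N = size s.
Proof.
rewrite -sum1_size -(big_undup_iterop_count addn s xpredT).
by apply: eq_bigr => x _; rewrite Monoid.iteropE iter_addn_0 mul1n.
Qed.

Lemma leq_sum_eq (T : eqType) (s : seq T) (f g : T -> nat) :
  (forall x, f x <= g x)%N -> (\sum_(x <- s) g x <= \sum_(x <- s) f x)%N ->
  forall x, x \in s -> f x = g x.
Proof.
move=> le_fg; elim: s => [//|y s IHs]; rewrite !big_cons => le_sum x.
have le_s : (\sum_(x <- s) f x <= \sum_(x <- s) g x)%N by apply: leq_sum.
have := le_fg y; rewrite inE => le_y /orP[/eqP->|xs]; first by lia.
by apply: IHs => //; lia.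
Qed.

Section SymmetricRank.
Variable R : realFieldType.

Lemma rV_mul_tr_eq0 n (w : 'rV[R]_n) : w *m w^T = 0 -> w = 0.
Proof.
move=> /(congr1 (fun M : 'M_1 => M 0 0)); rewrite !mxE => sum_sq.
have sq_ge0 i : true -> 0 <= w 0 i * w^T i 0 by rewrite mxE -expr2 sqr_ge0.
apply/rowP => j; apply/eqP; rewrite mxE -sqrf_eq0 expr2.
by have := psumr_eq0P sq_ge0 sum_sq (i := j) isT; rewrite mxE => ->.
Qed.

Lemma sym_mulmx_sqr_eq0 n (B : 'M[R]_n) (v : 'rV_n) :
  B^T = B -> v *m B *m B = 0 -> v *m B = 0.
Proof.
move=> symB vBB; apply: rV_mul_tr_eq0.
by rewrite trmx_mul symB mulmxA vBB mul0mx.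
Qed.

Lemma mxrank_exp_sym n (B : 'M[R]_n) k :
  B^T = B -> \rank (B ^+ k.+1) = \rank B.
Proof.
move=> symB; apply/eqP; rewrite eqn_leq; apply/andP; split.
  by rewrite exprSr -mulmxE mxrankM_maxr.
apply: mxrank_leq_ker => v; elim: k => [|k IHk] vB; first by rewrite expr1 in vB.
apply: IHk; rewrite exprSr -mulmxE mulmxA; apply: sym_mulmx_sqr_eq0 => //.
by rewrite -!mulmxA !mulmxE mulrA -!exprSr.
Qed.

Lemma sum_corank_sym n (A : 'M[R]_n) (s : seq R) :
  A^T = A -> char_poly A = \prod_(y <- s) ('X - y%:P) ->
  (\sum_(x <- undup s) (n - \rank (A - x%:M)%R))%N = n.
Proof.
case: n A => [|n] A symA charA.
  have : size s = 0 by have := size_char_poly A; rewrite charA size_prod_XsubC => -[].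
  by case: s {charA} => // _; rewrite big_nil.
set u := undup s; pose p_ (i : 'I_(size u)) := ('X - (u`_i)%:P) ^+ count_mem u`_i s.
have charE : char_poly A = \prod_i p_ i.
  by rewrite charA -prodr_undup_exp_count (big_nth 0) big_mkord.
have coprime_p : {in predT &, forall i j, j != i -> coprimep (p_ i) (p_ j)}.
  move=> i j _ _ nji; rewrite coprimep_expl // coprimep_expr //.
  by rewrite coprimep_XsubC root_XsubC nth_uniq ?undup_uniq.
have rank_p i : \rank (kermxpoly A (p_ i)) = (n.+1 - \rank (A - (u`_i)%:M)%R)%N.
  have : (0 < count_mem (u`_i)%R s)%N.
    by rewrite -has_count has_pred1 -mem_undup mem_nth.
  rewrite /kermxpoly /p_; case: (count_mem _ _) => // k _.
  rewrite rmorphXn /= rmorphB /= horner_mx_X horner_mx_C mxrank_ker mxrank_exp_sym //.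
  by rewrite linearB /= symA tr_scalar_mx.
rewrite (big_nth 0) big_mkord.
under eq_bigr do rewrite -rank_p.
have := mxdirect_sum_kermx A coprime_p; rewrite mxdirectE /= => /eqP <-.
rewrite -(kermxpoly_prod A coprime_p) -charE.
by rewrite (kermxpoly_min (mxminpoly_dvd_char A)) mxrank1.
Qed.

Lemma mxrank_sub_scalar_sym n (A : 'M[R]_n) (s : seq R) x :
  A^T = A -> char_poly A = \prod_(y <- s) ('X - y%:P) ->
  \rank (A - x%:M) = (n - count_mem x s)%N.
Proof.
move=> symA charA.
have size_s : size s = n.
  by have := size_char_poly A; rewrite charA size_prod_XsubC => -[].
have le_count y : (n - \rank (A - y%:M)%R <= count_mem y s)%N.
  exact: corank_leq_count.
have eq_count : {in undup s, forall y, (n - \rank (A - y%:M)%R)%N = count_mem y s}.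
  move=> y; apply: (leq_sum_eq le_count).
  by rewrite sum_count_mem_undup sum_corank_sym // size_s.
have := rank_leq_row (A - x%:M); have := le_count x.
case: (boolP (x \in s)) => [xs|/count_memPn->]; last by lia.
by rewrite -eq_count ?mem_undup //; lia.
Qed.

End SymmetricRank.

Section ConstantRowSums.
Variables (R : realFieldType) (n : nat) (A : 'M[R]_n) (r : R) (s : seq R).
Hypotheses (symA : A^T = A) (rowA : const_mx 1 *m A = r *: const_mx 1 :> 'rV_n)
  (charA : char_poly A = \prod_(x <- r :: s) ('X - x%:P)).

Local Notation ones := (const_mx 1 : 'rV[R]_n).
Local Notation J := (const_mx 1 : 'M[R]_n).

Lemma tr_ones_mul_ones : ones^T *m ones = J.
Proof. by apply/matrixP => i j; rewrite !mxE big_ord1 !mxE mulr1. Qed.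

Lemma mxrank_const1 : (\rank J <= 1)%N.
Proof. by rewrite -tr_ones_mul_ones (leq_trans (mxrankM_maxl _ _)) ?rank_leq_col. Qed.

Lemma mulmx_const1_eq0 (v : 'rV[R]_n) : v *m ones^T = 0 -> v *m J = 0.
Proof. by rewrite -tr_ones_mul_ones mulmxA => ->; rewrite mul0mx. Qed.

Lemma ones_mul_const1 : ones *m J = n%:R *: ones.
Proof.
apply/rowP => j; rewrite !mxE mulr1.
by under eq_bigr do rewrite !mxE mulr1; rewrite sumr_const card_ord.
Qed.

Lemma const1_mul_tr_ones : J *m ones^T = n%:R *: ones^T.
Proof. by rewrite -[J]trmx_const -trmx_mul ones_mul_const1 linearZ. Qed.

Lemma mul_tr_ones : A *m ones^T = r *: ones^T.
Proof. by rewrite -symA -trmx_mul rowA linearZ. Qed.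

Lemma eigenvector_ortho_ones (v : 'rV[R]_n) mu :
  v *m A = mu *: v -> mu != r -> v *m ones^T = 0.
Proof.
move=> vA mur; have : (r - mu) *: (v *m ones^T) = 0.
  by rewrite scalerBl scalemxAr -mul_tr_ones mulmxA vA -scalemxAl subrr.
by move/eqP; rewrite scaler_eq0 subr_eq0 eq_sym (negbTE mur) => /eqP.
Qed.

Lemma size_spectrum : n = (size s).+1.
Proof. by have := size_char_poly A; rewrite charA size_prod_XsubC => -[]. Qed.

Lemma ones_neq0 : ones != 0.
Proof.
rewrite size_spectrum; apply/negP => /eqP/rowP/(_ ord0)/eqP.
by rewrite !mxE oner_eq0.
Qed.

Lemma natr_size_neq0 : n%:R != 0 :> R.
Proof. by rewrite size_spectrum pnatr_eq0. Qed.

Lemma mxrank_sub_rowsum : \rank (A - r%:M) = (n - (count_mem r s + 1))%N.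
Proof. by rewrite (mxrank_sub_scalar_sym _ symA charA) /= eqxx addnC. Qed.

Lemma mxrank_sub_neq_rowsum mu :
  mu != r -> \rank (A - mu%:M) = (n - count_mem mu s)%N.
Proof.
by move=> mur; rewrite (mxrank_sub_scalar_sym _ symA charA) /= eq_sym (negbTE mur).
Qed.

Lemma mxrank_shift_ge mu c :
  (n - (count_mem mu s + 1) <= \rank (A - mu%:M + c *: J)%R)%N.
Proof.
have [->|mur] := eqVneq mu r; last first.
  set X := A - mu%:M + c *: J.
  have : (\rank (A - mu%:M)%R <= \rank X + 1)%N.
    rewrite -[A - mu%:M](addrK (c *: J)) -/X.
    apply: leq_trans (mxrank_add _ _) _; rewrite leq_add2l mxrank_opp.
    exact: leq_trans (mxrank_scale _ _) mxrank_const1.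
  by rewrite mxrank_sub_neq_rowsum // => le_rank; rewrite subnDA leq_subLR addnC.
have [->|c0] := eqVneq c 0.
  by rewrite scale0r addr0 mxrank_sub_rowsum.
(* ker X is ker (A - r) with the direction of ones removed. *)
set X := A - r%:M + c *: J.
have X_ones : X *m ones^T = (c * n%:R) *: ones^T.
  rewrite mulmxDl mulmxBl mul_tr_ones mul_scalar_mx subrr add0r -scalemxAl.
  by rewrite const1_mul_tr_ones scalerA.
have ker_X (v : 'rV_n) : v *m X = 0 -> v *m (A - r%:M) = 0.
  move=> vX; have v1 : v *m ones^T = 0.
    have := congr1 (mulmx^~ ones^T) vX; rewrite mul0mx -mulmxA X_ones -scalemxAr.
    move/eqP; rewrite scaler_eq0 mulf_eq0 (negbTE c0) (negbTE natr_size_neq0).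
    by move/eqP.
  by move: vX; rewrite mulmxDr -scalemxAr mulmx_const1_eq0 // scaler0 addr0.
have ones_ker : ones *m (A - r%:M) = 0 by rewrite mulmxBr rowA mul_mx_scalar subrr.
have ones_X : ones *m X != 0.
  rewrite mulmxDr ones_ker add0r -scalemxAr ones_mul_const1 scalerA scaler_eq0.
  by rewrite mulf_eq0 negb_or !negb_or c0 natr_size_neq0 ones_neq0.
have := mxrank_ltn_ker ker_X ones_ker ones_X; rewrite mxrank_sub_rowsum; lia.
Qed.

Lemma mxrank_shift_le mu : mu != r ->
  (\rank (A - mu%:M + ((mu - r) / n%:R) *: J)%R <= n - (count_mem mu s + 1))%N.
Proof.
move=> mur; set X := A - mu%:M + _ *: J.
have ker_A (v : 'rV_n) : v *m (A - mu%:M) = 0 -> v *m X = 0.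
  move=> vA; have : v *m A = mu *: v.
    by apply/eqP; move: vA; rewrite mulmxBr mul_mx_scalar => /eqP; rewrite subr_eq0.
  move/eigenvector_ortho_ones/(_ mur)/mulmx_const1_eq0 => vJ.
  by rewrite mulmxDr vA -scalemxAr vJ scaler0 addr0.
have ones_X : ones *m X = 0.
  rewrite mulmxDr mulmxBr rowA mul_mx_scalar -scalemxAr ones_mul_const1 scalerA.
  by rewrite divfK ?natr_size_neq0 // -scalerBl -scalerDl subrKA subrr scale0r.
have ones_A : ones *m (A - mu%:M) != 0.
  rewrite mulmxBr rowA mul_mx_scalar -scalerBl scaler_eq0 negb_or subr_eq0.
  by rewrite eq_sym mur ones_neq0.
by have := mxrank_ltn_ker ker_A ones_X ones_A; rewrite mxrank_sub_neq_rowsum //; lia.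
Qed.

End ConstantRowSums.

Lemma bigmax_seq_attained (T : eqType) (F : T -> nat) (s : seq T) :
  s != [::] -> exists2 y, y \in s & (\max_(x <- s) F x)%N = F y.
Proof.
elim: s => [//|x s IHs] _; rewrite big_cons.
have [->|/IHs[y ys ->]] := eqVneq s [::].
  by exists x; rewrite ?mem_head // big_nil maxn0.
have [le_yx|lt_xy] := leqP (F y) (F x).
  by exists x; rewrite ?mem_head //; apply/maxn_idPl.
by exists y; rewrite ?inE ?ys ?orbT //; apply/maxn_idPr/ltnW.
Qed.

Lemma count_mem_le_bigmax (T : eqType) (s : seq T) x :
  (count_mem x s <= \max_(y <- s) count_mem y s)%N.
Proof.
have [xs|/count_memPn->//] := boolP (x \in s).
exact: (leq_bigmax_seq (F := fun y => count_mem y s) x xs).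
Qed.

Section RegularGraph.
Variables (R : realType) (n : nat) (e : rel 'I_n) (r : nat).
Hypotheses (simple_e : simple_graph e) (regular_e : regular e r).

Lemma adjmx_sym : (adjmx R e)^T = adjmx R e.
Proof. by case: simple_e => sym_e _; apply/matrixP => i j; rewrite !mxE sym_e. Qed.

Lemma ones_mul_adjmx : const_mx 1 *m adjmx R e = r%:R *: const_mx 1 :> 'rV_n.
Proof.
case: simple_e => sym_e _; apply/rowP => j; rewrite !mxE mulr1 -(regular_e j).
rewrite /deg -sum1_card natr_sum [RHS]big_mkcond /=.
by apply: eq_bigr => i _; rewrite !mxE mul1r inE sym_e; case: (e j i).
Qed.

Lemma degmx_regular : degmx R e = r%:R%:M.
Proof.
by apply/matrixP => i j; rewrite !mxE; case: eqP => [->|_]; rewrite ?regular_e.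
Qed.

Lemma univ_adjE a b c d : a != 0 -> univ_adj e a b c d =
  a *: (adjmx R e - (- (b + d * r%:R) / a)%:M + (c / a) *: const_mx 1).
Proof.
move=> a0; rewrite /univ_adj degmx_regular /allones.
apply/matrixP => i j; rewrite !mxE.
by case: (i == j); rewrite ?mulr1n ?mulr0n; field.
Qed.

End RegularGraph.

Theorem theorem11 (R : realType) (n : nat) (e : rel 'I_n) (r : nat)
    (ls : seq R) :
  simple_graph e -> connected_graph e -> regular e r ->
  char_poly (adjmx R e) = \prod_(x <- r%:R :: ls) ('X - x%:P) ->
  is_mur R e (n - ((\max_(x <- ls) count_mem x ls) + 1))%N.
Proof.
move=> simple_e _ regular_e charA.
have symA := adjmx_sym R simple_e.
have rowA := ones_mul_adjmx R simple_e regular_e.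
have shiftE mu c : univ_adj e 1 (- mu) c 0 = adjmx R e - mu%:M + c *: const_mx 1.
  by rewrite (univ_adjE regular_e) ?oner_eq0 // scale1r mul0r addr0 opprK !divr1.
split=> [|a b c d a0]; last first.
  rewrite (univ_adjE regular_e) // mxrank_scale_nz //.
  apply: leq_trans _ (mxrank_shift_ge symA rowA charA _ (c / a)).
  by rewrite leq_sub2l // leq_add2r count_mem_le_bigmax.
have [y ->] : exists y, (\max_(x <- ls) count_mem x ls)%N = count_mem y ls.
  have [->|/(bigmax_seq_attained (fun x => count_mem x ls))[y _ ->]] :=
    eqVneq ls [::]; last by exists y.
  by exists 0; rewrite big_nil.
exists 1; have [->|yr] := eqVneq y r%:R.
  exists (- r%:R), 0, 0; split; first exact: oner_neq0.
  by rewrite shiftE scale0r addr0 (mxrank_sub_rowsum symA charA).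
exists (- y), ((y - r%:R) / n%:R), 0; split; first exact: oner_neq0.
apply/eqP; rewrite eqn_leq shiftE (mxrank_shift_le symA rowA charA yr) /=.
exact: mxrank_shift_ge symA rowA charA _ _.
Qed.
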